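(* Let $f:\mathbb{R}^n\to\mathbb{R}$ be continuous and bounded with non-empty set of global minimizers $\mathfrak{M}$, and assume (E): there is $\beta>0$ such that for every $x\in\mathbb{R}^n$ there exist $\hat\alpha\in\mathcal{A}$ and a time $t(x)\in[0,\beta(f(x)-\underline{f})]$ with $y^{\hat\alpha}_x(t(x))\in\mathfrak{M}$. Then there exists a constant $\widetilde K>0$, independent of $\lambda$, such that for every $\lambda>0$, $\widetilde K\big(u_\lambda(x)-\underline{f}/\lambda\big)\le f(x)-\underline{f}$ for all $x\in\mathbb{R}^n$. In particular, for every $\lambda\in(0,\widetilde K)$, Assumption (B) holds with $K=\widetilde K$, i.e. $K>\lambda$ and $K\,\tilde u_\lambda\le\tilde f$ on $\mathbb{R}^n$.
   Context: $\underline{f}:=\inf f$, $\mathfrak{M}:=\{z: f(z)=\underline{f}\}$. Fix $M>\sqrt{6\sup|f|}$. $\mathcal{A}$: measurable $\alpha:[0,\infty)\to\mathbb{R}^n$ with $|\alpha(s)|\le M$. $y^\alpha_x(t)=x+\int_0^t\alpha$. For $\lambda>0$: $\mathscr{J}(x,\alpha)=\int_0^\infty(\tfrac12|\alpha(s)|^2+f(y^\alpha_x(s)))e^{-\lambda s}ds$, $u_\lambda=\inf_{\mathcal{A}}\mathscr{J}$. $\tilde f:=f-\underline{f}$, $\tilde u_\lambda:=u_\lambda-\underline{f}/\lambda$. *)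

From HB Require Import structures.
From mathcomp Require Import all_boot all_order all_algebra.
From mathcomp Require Import all_classical all_reals all_analysis.
Set Implicit Arguments. Unset Strict Implicit. Unset Printing Implicit Defensive.
Import Order.TTheory GRing.Theory Num.Theory.
Import numFieldNormedType.Exports.
Local Open Scope classical_set_scope.
Local Open Scope ring_scope.

Section Defs.
Variables (R : realType) (n : nat).

Definition enorm (v : 'rV[R]_n) : R := Num.sqrt (\sum_(i < n) (v ord0 i) ^+ 2).

Definition finf (f : 'rV[R]_n -> R) : R := inf (range f).
Definition fsupabs (f : 'rV[R]_n -> R) : R := sup (range (fun x => `|f x|)).
Definition minimizers (f : 'rV[R]_n -> R) : set 'rV[R]_n :=
  [set z | f z = finf f].

Definition admissible (M : R) (alpha : R -> 'rV[R]_n) : Prop :=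
  (forall i : 'I_n,
     measurable_fun (`[0%R, +oo[ : set R) (fun s => alpha s ord0 i)) /\
  (forall s, 0 <= s -> enorm (alpha s) <= M).

Definition traj (x : 'rV[R]_n) (alpha : R -> 'rV[R]_n) (t : R) : 'rV[R]_n :=
  x + \row_(i < n) Rintegral (@lebesgue_measure R) (`[0%R, t] : set R)
                     (fun s => alpha s ord0 i).

Definition cost (f : 'rV[R]_n -> R) (lambda : R) (x : 'rV[R]_n)
    (alpha : R -> 'rV[R]_n) : \bar R :=
  (\int[@lebesgue_measure R]_(s in (`[0%R, +oo[ : set R))
     ((2^-1 * enorm (alpha s) ^+ 2 + f (traj x alpha s))
        * expR (- (lambda * s)))%:E)%E.

Definition value_fun (f : 'rV[R]_n -> R) (M lambda : R) (x : 'rV[R]_n) : R :=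
  fine (ereal_inf [set cost f lambda x alpha | alpha in admissible M]).

End Defs.

(* Stopping an admissible control at the time t(x) at which it reaches the set
   of minimizers, and staying there, gives a control whose cost exceeds the
   trivial lower bound inf f / lambda by at most a constant times t(x); by (E)
   that time is at most beta (f x - inf f). *)
From HB Require Import structures.
From mathcomp Require Import all_boot all_order all_algebra.
From mathcomp Require Import all_classical all_reals all_analysis.
From mathcomp Require Import lra.
Set Implicit Arguments. Unset Strict Implicit. Unset Printing Implicit Defensive.
Import Order.TTheory GRing.Theory Num.Theory.
Import numFieldNormedType.Exports.
Local Open Scope classical_set_scope.
Local Open Scope ring_scope.

(* No measurability is needed: the integral of a nonnegative function is a
   supremum over the simple functions below it. *)
Lemma le_integral_any d (T : measurableType d) (R : realType)
    (mu : {measure set T -> \bar R}) (D : set T) (f g : T -> \bar R) :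
  (forall x, D x -> (f x <= g x)%E) ->
  (\int[mu]_(x in D) f x <= \int[mu]_(x in D) g x)%E.
Proof.
move=> fg; rewrite (integralE _ _ f) (integralE _ _ g); apply: leeB.
- rewrite !ge0_integralE; [|by move=> *; exact: funepos_ge0..].
  apply: ereal_sup_le => _ [h hf <-]; exists h => // x.
  apply: (le_trans (hf x)); rewrite /patch; case: ifP => // xD.
  by apply: (funepos_le (D:=D)) => // y yD; apply: fg; rewrite inE in yD.
- rewrite !ge0_integralE; [|by move=> *; exact: funeneg_ge0..].
  apply: ereal_sup_le => _ [h hf <-]; exists h => // x.
  apply: (le_trans (hf x)); rewrite /patch; case: ifP => // xD.
  by apply: (funeneg_le (D:=D)) => // y yD; apply: fg; rewrite inE in yD.
Qed.

Lemma fine_ereal_inf_le (R : realType) (S : set \bar R) (r s : R) :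
  (forall y, S y -> (r%:E <= y)%E) -> (exists2 y, S y & (y <= s%:E)%E) ->
  fine (ereal_inf S) <= s.
Proof.
move=> Sr [y Sy ys].
have lb : (r%:E <= ereal_inf S)%E by exact/ereal_infP.
have ub : (ereal_inf S <= s%:E)%E by apply: le_trans ys; exact: ereal_inf_lbound.
by move: lb ub; case: (ereal_inf S) => //= i _; rewrite lee_fin.
Qed.

Section half_line_integrals.
Variable R : realType.
Notation mu := (@lebesgue_measure R).

Lemma cst_expR_exponential_pdf (l c s : R) : 0 < l -> 0 <= s ->
  c * expR (- (l * s)) = c / l * exponential_pdf l s.
Proof.
by move=> l0 s0; rewrite exponential_pdfE// mulNr mulrA divfK// gt_eqF.
Qed.

Lemma integrable_exponential_pdf_half_line (l : R) : 0 < l ->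
  mu.-integrable (`[0%R, +oo[ : set R) (fun s => (exponential_pdf l s)%:E).
Proof.
by move=> l0; exact: integrableS measurableT _ _ (integrable_exponential_pdf l0).
Qed.

Lemma integrable_cst_expR (l c : R) : 0 < l ->
  mu.-integrable (`[0%R, +oo[ : set R) (fun s => (c * expR (- (l * s)))%:E).
Proof.
move=> l0; have : mu.-integrable (`[0%R, +oo[ : set R)
    (fun s => (c / l)%:E * (exponential_pdf l s)%:E)%E.
  by apply: integrableZl => //; exact: integrable_exponential_pdf_half_line.
apply: eq_integrable => //.
by move=> s; rewrite inE /= in_itv /= andbT => s0; rewrite cst_expR_exponential_pdf.
Qed.

Lemma integral_cst_expR (l c : R) : 0 < l ->
  (\int[mu]_(s in (`[0%R, +oo[ : set R)) (c * expR (- (l * s)))%:E = (c / l)%:E)%E.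
Proof.
move=> l0.
transitivity (\int[mu]_(s in (`[0%R, +oo[ : set R))
    ((c / l)%:E * (exponential_pdf l s)%:E))%E.
  apply: eq_integral => s; rewrite inE /= in_itv /= andbT => s0.
  by rewrite -EFinM cst_expR_exponential_pdf.
rewrite integralZl ?integrable_exponential_pdf_half_line// integral_mkcond.
have -> : (fun s => (exponential_pdf l s)%:E) \_ (`[0%R, +oo[ : set R)
    = (fun s => (exponential_pdf l s)%:E).
  apply/funext => s; rewrite /patch; case: ifPn => // /negP.
  rewrite inE /= in_itv /= andbT => /negP; rewrite -ltNge => s0.
  by rewrite lt0_exponential_pdf.
by rewrite integral_exponential_pdf// mule1.
Qed.

Lemma integrable_cst_indic_itv (c t : R) :
  mu.-integrable (`[0%R, +oo[ : set R) (fun s => (c * \1_(`[0%R, t] : set R) s)%:E).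
Proof.
have : mu.-integrable (`[0%R, +oo[ : set R)
    (fun s => c%:E * (\1_(`[0%R, t] : set R) s)%:E)%E.
  apply: integrableZl => //.
  exact: integrableS measurableT _ _ (@integrable_indic_itv R 0 t true false).
by apply: eq_integrable => // s _; rewrite EFinM.
Qed.

Lemma integral_cst_indic_itv (c t : R) : 0 <= t ->
  (\int[mu]_(s in (`[0%R, +oo[ : set R)) (c * \1_(`[0%R, t] : set R) s)%:E = (c * t)%:E)%E.
Proof.
move=> t0.
transitivity (\int[mu]_(s in (`[0%R, +oo[ : set R))
    (c%:E * (\1_(`[0%R, t] : set R) s)%:E))%E.
  by apply: eq_integral => s _; rewrite EFinM.
rewrite integralZl//; last first.
  exact: integrableS measurableT _ _ (@integrable_indic_itv R 0 t true false).
rewrite integral_indic// setIidl; last first.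
  by move=> u /=; rewrite !in_itv/= => /andP[-> _].
rewrite EFinM; congr (_ * _)%E.
apply: etrans; first exact: (@lebesgue_measure_itv R `[0%R, t]).
by rewrite /= lte_fin; case: ltgtP t0 => // [_|<-] _; rewrite ?sube0.
Qed.

End half_line_integrals.

Section stopped_control.
Variables (R : realType) (n : nat).
Implicit Types (f : 'rV[R]_n -> R) (a : R -> 'rV[R]_n).

Lemma enorm0 : enorm (0 : 'rV[R]_n) = 0.
Proof. by rewrite /enorm big1 ?sqrtr0// => i _; rewrite mxE expr0n. Qed.

Definition stop_control a (t s : R) : 'rV[R]_n := if s <= t then a s else 0.

Lemma traj_stop_control x a t s : 0 <= t -> t <= s ->
  traj x (stop_control a t) s = traj x a t.
Proof.
move=> t0 ts; rewrite /traj; congr (_ + _); apply/rowP => i; rewrite !mxE.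
rewrite /Rintegral; congr fine.
rewrite -[in RHS](@setIidr _ `[0%R, s] `[0%R, t]); last first.
  by move=> u /=; rewrite !in_itv/= => /andP[-> ut]; exact: le_trans ut ts.
rewrite integral_mkcondr; apply: eq_integral => u.
rewrite inE /= in_itv /= => /andP[u0 _].
rewrite /patch /stop_control; case: ifPn => ut.
  by rewrite ifT //; apply/mem_set; rewrite /= in_itv /= u0 ut.
rewrite ifF ?mxE //; apply/negbTE/negP => /set_mem /=.
by rewrite in_itv /= (negbTE ut) andbF.
Qed.

Lemma admissible_stop_control M a t : 0 <= M ->
  admissible M a -> admissible M (stop_control a t).
Proof.
move=> M0 [ma aM]; split => [i|s s0]; last first.
  by rewrite /stop_control; case: ifP => _; [exact: aM | rewrite enorm0].
have -> : (fun s => stop_control a t s ord0 i)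
    = (fun s => a s ord0 i) \_ (`]-oo, t] : set R).
  apply/funext => s; rewrite /stop_control /patch; case: ifPn => st.
    by rewrite ifT //; apply/mem_set; rewrite /= in_itv /= st.
  rewrite ifF ?mxE //; apply/negbTE/negP => /set_mem /=.
  by rewrite in_itv /= (negbTE st).
by apply/measurable_restrict => //; exact: measurable_funS (ma i).
Qed.

Lemma cost_ge f (l m : R) x a : 0 < l -> (forall y, m <= f y) ->
  ((m / l)%:E <= cost f l x a)%E.
Proof.
move=> l0 fm; rewrite -integral_cst_expR//; apply: le_integral_any => s _.
rewrite lee_fin ler_wpM2r ?expR_ge0// -[m]add0r.
by rewrite lerD// mulr_ge0// ?invr_ge0// sqr_ge0.
Qed.

(* Up to time t the integrand exceeds m e^{-l s} by at most M^2/2 + (B - m);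
   afterwards the state rests on the level set {f = m}. *)
Lemma cost_stop_control_le f (l m B M t : R) x a : 0 < l -> 0 <= t ->
  (forall y, m <= f y) -> (forall y, f y <= B) ->
  (forall s, 0 <= s -> enorm (a s) <= M) -> f (traj x a t) = m ->
  (cost f l x (stop_control a t) <= (m / l + (M ^+ 2 / 2 + (B - m)) * t)%:E)%E.
Proof.
move=> l0 t0 fm fB aM ftm.
rewrite EFinD -integral_cst_expR// -integral_cst_indic_itv// -integralD//;
  [|exact: integrable_cst_expR|exact: integrable_cst_indic_itv].
apply: le_integral_any => s /=; rewrite in_itv /= andbT => s0.
rewrite -EFinD lee_fin.
have E0 : 0 <= expR (- (l * s)) by exact: expR_ge0.
have E1 : expR (- (l * s)) <= 1 by rewrite expR_le1 oppr_le0 mulr_ge0// ltW.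
case: (leP s t) => st; last first.
  have -> : stop_control a t s = 0 by rewrite /stop_control lt_geF.
  rewrite indicE memNset /=; last by rewrite in_itv/= (lt_geF st) andbF.
  rewrite (traj_stop_control x a t0 (ltW st)) ftm.
  by rewrite enorm0 expr0n /= !mulr0 add0r addr0.
have -> : stop_control a t s = a s by rewrite /stop_control st.
rewrite indicE mem_set /=; last by rewrite in_itv /= s0 st.
have e2 : enorm (a s) ^+ 2 <= M ^+ 2.
  have e0 : 0 <= enorm (a s) := sqrtr_ge0 _.
  by rewrite lerXn2r ?nnegrE ?aM// (le_trans e0 (aM s s0)).
have := fm (traj x (stop_control a t) s); have := fB (traj x (stop_control a t) s).
set F := f _; set e := enorm _ in e2 *.
move: (expR _) E0 E1 => E E0 E1 FB mF.
have dev0 : 0 <= 2^-1 * e ^+ 2 + F - m.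
  by rewrite -addrA addr_ge0 ?subr_ge0// mulr_ge0// sqr_ge0.
have dE : 0 <= 1 - E by rewrite subr_ge0.
have := mulr_ge0 dev0 dE; nra.
Qed.

Lemma value_fun_le_stop f (M l m B t : R) x a : 0 < l -> 0 <= M -> 0 <= t ->
  (forall y, m <= f y) -> (forall y, f y <= B) ->
  admissible M a -> f (traj x a t) = m ->
  value_fun f M l x <= m / l + (M ^+ 2 / 2 + (B - m)) * t.
Proof.
move=> l0 M0 t0 fm fB adm ftm; apply: (@fine_ereal_inf_le _ _ (m / l)).
  by move=> _ [b _ <-]; exact: cost_ge.
exists (cost f l x (stop_control a t)).
  by exists (stop_control a t) => //; exact: admissible_stop_control.
by apply: cost_stop_control_le => //; case: adm.
Qed.

End stopped_control.

Theorem mainTheorem14 (R : realType) (n : nat) (f : 'rV[R]_n -> R) (M : R)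
  (f_cont : continuous f)
  (f_bnd : exists C : R, forall x, `|f x| <= C)
  (M_big : Num.sqrt (6 * fsupabs f) < M)
  (Mne : minimizers f !=set0)
  (E : exists beta : R, 0 < beta /\
     forall x : 'rV[R]_n, exists alpha : R -> 'rV[R]_n,
       admissible M alpha /\
       exists t : R, 0 <= t /\ t <= beta * (f x - finf f) /\
         minimizers f (traj x alpha t)) :
  exists Kt : R, 0 < Kt /\
    (forall lambda : R, 0 < lambda -> forall x : 'rV[R]_n,
       Kt * (value_fun f M lambda x - finf f / lambda) <= f x - finf f) /\
    (forall lambda : R, 0 < lambda < Kt ->
       lambda < Kt /\ forall x : 'rV[R]_n,
       Kt * (value_fun f M lambda x - finf f / lambda) <= f x - finf f).
Proof.
have [B hB] := f_bnd.
have f_betw y : - B <= f y <= B by rewrite -ler_norml.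
have fB y : f y <= B by have /andP[] := f_betw y.
have finf_le y : finf f <= f y.
  apply: ge_inf; last by exists y.
  by exists (- B) => _ [z _ <-]; have /andP[] := f_betw z.
have M0 : 0 <= M by apply/ltW/le_lt_trans/M_big; exact: sqrtr_ge0.
have [beta [beta0 reach]] := E.
pose c := M ^+ 2 / 2 + (B - finf f).
have c0 : 0 <= c.
  by rewrite addr_ge0 ?divr_ge0 ?sqr_ge0 ?subr_ge0 ?(le_trans (finf_le 0) (fB 0)).
have Kt0 : 0 < ((c + 1) * beta)^-1 by rewrite invr_gt0 mulr_gt0 ?ltr_pwDr.
have bound l : 0 < l -> forall x,
    ((c + 1) * beta)^-1 * (value_fun f M l x - finf f / l) <= f x - finf f.
  move=> l0 x; have [a [adm [t [t0 [tle mt]]]]] := reach x.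
  have := value_fun_le_stop l0 M0 t0 finf_le fB adm mt.
  rewrite -/c -lerBlDl => le_ct.
  rewrite ler_pdivrMl ?mulr_gt0 ?ltr_pwDr//; apply: le_trans le_ct _.
  apply: (le_trans (y := c * (beta * (f x - finf f)))); first by rewrite ler_wpM2l.
  by rewrite mulrA ler_wpM2r ?subr_ge0 ?finf_le// ler_wpM2r ?lerDl// ltW.
exists ((c + 1) * beta)^-1; split=> //; split=> // l /andP[l0 lK].
by split=> //; exact: bound.
Qed.
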